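(* Let $p$ be a prime, let $G$ be a group of order $p^5$, and let $\alpha\in\mathrm{Aut}(G)$ have order $p$. Let $P=G\rtimes\langle\alpha\rangle$ and suppose $P''\neq 1$. Then $P$ has derived length $3$ and $\mathrm{cd}(P)=\{1,p,p^2\}$.
   Context: $P''$ denotes the second derived subgroup $[P',P']$. For a finite group $X$, $\mathrm{cd}(X)=\{\chi(1)\mid \chi\in\mathrm{Irr}(X)\}$ is the set of degrees of the complex irreducible characters of $X$. *)

From HB Require Import structures.
From mathcomp Require Import all_boot all_order all_algebra all_fingroup all_solvable all_field all_character.
Set Implicit Arguments. Unset Strict Implicit. Unset Printing Implicit Defensive.
Import GRing.Theory Num.Theory.

Local Open Scope group_scope.

Definition cd (gT : finGroupType) (X : {group gT}) : pred algC :=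
  [pred x : algC | [exists i : Iirr X, ('chi[X]_i 1%g == x)%R]].

Definition has_derived_length (gT : finGroupType) (X : {group gT}) (n : nat) : bool :=
  (X^`(n) == 1) && [forall m : 'I_n, X^`(m) != 1].

From HB Require Import structures.
From mathcomp Require Import all_boot all_order all_algebra all_fingroup all_solvable all_field all_character.
Set Implicit Arguments. Unset Strict Implicit. Unset Printing Implicit Defensive.
Import GRing.Theory Num.Theory.
Local Open Scope group_scope.

(* Since |P| = p^6, the theorem is about a p-group of order p^6 with P'' <> 1.
   In a p-group every non-abelian term of the derived series has index at least
   p^2 over the next one, so P''' = 1.  Irreducible degrees divide |P| and their
   squares are smaller than |P|, so cd(P) lies in {1, p, p^2}.  Without a degree p
   the sum of the squares of the degrees would force p^4 to divide |P : P'|, while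
   p^3 divides |P'|.  Without a degree p^2, P'' would lie in every kernel: a
   character of degree p is, modulo its kernel, induced from a linear character of
   a subgroup of index p, found by Clifford theory over a maximal normal abelian
   subgroup. *)

Section DerivedSeries.

Variables (gT : finGroupType) (p : nat).
Implicit Type X : {group gT}.

Lemma nonabelian_pgroup_dvd_index_der1 X :
  p.-group X -> ~~ abelian X -> (p ^ 2 %| #|X : X^`(1)|)%N.
Proof.
move=> pX nabX.
have ntX : X :!=: 1 by apply: contra nabX => /eqP->; exact: abelian1.
have [p_pr _ _] := pgroup_pdiv pX ntX.
have [k oXX'] := p_natP (pnat_dvd (dvdn_indexg X X^`(1)) pX).
have [le2k|lt_k2] := leqP 2 k; first by rewrite oXX' dvdn_exp2l.
case/negP: nabX; apply/cyclic_abelian.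
apply: (cyclic_nilpotent_quo_der1_cyclic (pgroup_nil pX)).
apply: (dvdn_prime_cyclic p_pr); rewrite card_quotient ?der_norm // oXX'.
by rewrite -{2}(expn1 p) dvdn_exp2l // -ltnS.
Qed.

Lemma pgroup_dvd_index_derg X k :
  p.-group X -> X^`(k) != 1 -> (p ^ (2 * k) %| #|X : X^`(k)|)%N.
Proof.
move=> pX; elim: k => [|k IHk] ntXk; first by rewrite indexgg.
have ntXk' : X^`(k) != 1.
  by apply: contraNneq ntXk => Xk1; rewrite -subG1 -Xk1 der_subS.
have nabXk : ~~ abelian X^`(k) by apply: contra ntXk => /derG1P/eqP.
rewrite -(Lagrange_index (der_sub k X) (der_subS k X)) mulnS expnD mulnC.
apply: dvdn_mul; first exact: IHk.
exact: nonabelian_pgroup_dvd_index_der1 (pgroupS (der_sub k X) pX) nabXk.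
Qed.

Lemma pgroup_dvd_card_derg X k :
  p.-group X -> X^`(k) != 1 -> (p ^ (2 * k).+1 %| #|X|)%N.
Proof.
move=> pX ntXk; rewrite -(Lagrange (der_sub k X)) expnS dvdn_mul //.
  by have [_ ->] := pgroup_pdiv (pgroupS (der_sub k X) pX) ntXk.
exact: pgroup_dvd_index_derg.
Qed.

End DerivedSeries.

Local Open Scope ring_scope.

Section Characters.

Variable gT : finGroupType.
Implicit Types X A T : {group gT}.

Lemma irr1_pgroup_pfactor p n X (i : Iirr X) :
  prime p -> #|X| = (p ^ n)%N -> (0 < n)%N ->
  exists2 k, (2 * k < n)%N & 'chi_i 1%g = (p ^ k)%N%:R.
Proof.
move=> p_pr oX n_gt0; have [m chi1] := natrP (Cnat_irr1 i).
have := dvd_irr1_cardG i; rewrite chi1 oX dvdC_nat => /(dvdn_pfactor _ _ p_pr).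
case=> k _ def_m; exists k; last by rewrite def_m.
rewrite -(ltn_exp2l _ _ (prime_gt1 p_pr)) mulnC expnM -def_m.
have [i0 | nz_i] := eqVneq i 0.
  move: chi1; rewrite i0 irr0 cfun11 => /esym/eqP; rewrite pnatr_eq1 => /eqP->.
  by rewrite exp1n -[1%N](expn0 p) ltn_exp2l ?prime_gt1.
have : 1 + 'chi_i 1%g ^+ 2 <= #|X|%:R :> algC.
  rewrite -irr_sum_square (bigD1 0) //= (bigD1 i) //= irr0 cfun11 expr1n addrA.
  by rewrite lerDl sumr_ge0 // => j _; rewrite exprn_ge0 ?char1_ge0 ?irr_char.
by rewrite chi1 oX -natrX -(natrD _ 1%N) ler_nat add1n.
Qed.

Lemma dvdn_index_der1_nonlinear (m : nat) X :
    (m %| #|X|)%N ->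
    (forall i : Iirr X, 'chi_i 1%g != 1 -> (m%:R %| 'chi_i 1%g ^+ 2)%C) ->
  (m %| #|X : X^`(1)|)%N.
Proof.
move=> dv_m_X dv_m_nonlin; have sum_sq := irr_sum_square X.
have lin_sq :
    \sum_(i | 'chi[X]_i \is a linear_char) 'chi_i 1%g ^+ 2 = #|X : X^`(1)|%:R.
  rewrite (eq_bigr (fun _ => 1)) => [|i /lin_char1->]; last by rewrite expr1n.
  by rewrite sumr_const -card_lin_irr.
rewrite (bigID (fun i => 'chi[X]_i \is a linear_char)) /= lin_sq in sum_sq.
have : (m%:R %| #|X|%:R)%C by rewrite dvdC_nat.
rewrite -sum_sq rpredDr ?dvdC_nat //; apply: rpred_sum => i.
by rewrite qualifE /= irr_char /=; apply: dv_m_nonlin.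
Qed.

Lemma der2_sub_cfker_Ind_lin X T (lambda : 'CF(T)) :
    T <| X -> abelian (X / T) -> lambda \is a linear_char ->
  X^`(2)%g \subset cfker ('Ind[X] lambda).
Proof.
move=> nsTX abXT lin_lambda; have sTX := normal_sub nsTX.
have sX'T : X^`(1)%g \subset T := der1_min (normal_norm nsTX) abXT.
have nz_lambda : lambda != 0.
  by rewrite -(char1_eq0 (lin_charW lin_lambda)) lin_char1 ?oner_eq0.
rewrite cfker_Ind ?lin_charW //.
apply: gcore_max; last exact: der_norm.
exact: subset_trans (dergS 1 sX'T) (lin_char_der1 lin_lambda).
Qed.

Lemma invariant_lin_constt_sub_cfcenter X A (i : Iirr X) (t : Iirr A) :
    A <| X -> t \in irr_constt ('Res[A] 'chi_i) ->
    'chi_t \is a linear_char -> X \subset 'I['chi_t] ->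
  A \subset 'Z('chi_i)%CF.
Proof.
move=> nsAX tA lin_t Xinv; have sAX := normal_sub nsAX.
have := Clifford_Res_sum_cfclass nsAX tA.
rewrite cfclass_invariant // big_seq1; set e := '[_, _] => Res_chi.
have chi1 : 'chi_i 1%g = e.
  by rewrite -(cfRes1 A) Res_chi cfunE lin_char1 // mulr1.
apply/subsetP => x Ax; rewrite irr_cfcenterE ?(subsetP sAX) //.
rewrite -(cfResE _ sAX Ax) Res_chi cfunE normrM normC_lin_char // mulr1.
by rewrite -chi1 ger0_norm ?char1_ge0 ?irr_char.
Qed.

Lemma constt_Inertia_Ind X A (i : Iirr X) (t : Iirr A) :
    A <| X -> t \in irr_constt ('Res[A] 'chi_i) ->
  exists s : Iirr 'I_X['chi_t]%G, 'chi_i = 'Ind[X] 'chi_s.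
Proof.
move=> nsAX tA; have [Ind_irr _ im_Ind _ _] := constt_Inertia_bijection t nsAX.
have /imsetP[s As ->] :
    i \in Ind_Iirr X @: irr_constt ('Ind['I_X['chi_t]] 'chi_t).
  by rewrite im_Ind constt_Ind_Res.
by exists s; rewrite cfIirrE ?Ind_irr.
Qed.

Lemma cfaithful_irr1_prime_der2 p X (i : Iirr X) :
  prime p -> p.-group X -> cfaithful 'chi_i -> 'chi_i 1%g = p%:R ->
  X^`(2)%g = 1%g.
Proof.
move=> p_pr pX ffi chi1.
have nabX : ~~ abelian X.
  apply/negP => /char_abelianP/(_ i)/lin_char1; rewrite chi1 => /eqP.
  by rewrite pnatr_eq1 => /eqP p1; rewrite p1 in p_pr.
(* A self-centralizing A is not central, so faithfulness makes the constituent t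
   of chi_i on A non-invariant and chi_i is induced from its inertia group. *)
have [A maxA _] : {A : {group gT} | [max A | A <| X & abelian A] & 1%G \subset A}.
  by apply: maxgroup_exists; rewrite normal1 abelian1.
have [nsAX cXA_A] := SCN_P (max_SCN pX maxA); have /andP[_ abA] := maxgroupp maxA.
have not_sAZ : ~~ (A \subset 'Z(X)).
  apply: contra nabX => sAZ.
  have cAX : X \subset 'C(A) by rewrite centsC (subset_trans sAZ) ?subsetIr.
  by rewrite -(setIidPl cAX) cXA_A.
have [t tA] := constt_cfRes_irr A i.
have lin_t : 'chi_t \is a linear_char by apply/char_abelianP.
have not_Xinv : ~~ (X \subset 'I['chi_t]).
  apply: contra not_sAZ => Xinv; rewrite -(cfcenter_fful_irr ffi).
  exact: invariant_lin_constt_sub_cfcenter tA lin_t Xinv.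
have [s chiE] := constt_Inertia_Ind nsAX tA; set T := 'I_X['chi_t]%G in s chiE.
have sTX : T \subset X := Inertia_sub X 'chi_t.
have [n s1] := natrP (Cnat_irr1 s).
have p_eq : p = (#|X : T| * n)%N.
  by apply/eqP; rewrite -(eqr_nat algC) natrM -s1 -cfInd1 // -chiE chi1.
have iTp : #|X : T| = p.
  apply/(prime_nt_dvdP p_pr); last by rewrite p_eq dvdn_mulr.
  by rewrite indexg_eq1 subsetI subxx.
have n1 : n = 1%N.
  move: p_eq; rewrite iTp -{1}(muln1 p) => /eqP.
  by rewrite eqn_pmul2l ?prime_gt0 // => /eqP <-.
have nsTX : T <| X by apply/(p_maximal_normal pX)/p_index_maximal; rewrite ?iTp.
have abXT : abelian (X / T).
  by rewrite cyclic_abelian // prime_cyclic // card_quotient ?normal_norm ?iTp.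
have lin_s : 'chi_s \is a linear_char by rewrite qualifE /= irr_char /= s1 n1.
apply/trivgP; apply: subset_trans ffi.
by rewrite chiE der2_sub_cfker_Ind_lin.
Qed.

End Characters.

Lemma irr1_prime_der2_sub_cfker (gT : finGroupType) p (X : {group gT})
    (i : Iirr X) :
  prime p -> p.-group X -> 'chi_i 1%g = p%:R -> (X^`(2) \subset cfker 'chi_i)%g.
Proof.
move=> p_pr pX chi1; have nsKX := cfker_normal 'chi_i.
set j := quo_Iirr (cfker 'chi_i) i; have chiE : 'chi_j = ('chi_i / _)%CF.
  exact: quo_IirrE nsKX (subxx _).
have fful_j : cfaithful 'chi_j by rewrite chiE cfaithful_quo.
have j1 : 'chi_j 1%g = p%:R by rewrite chiE cfQuo1.
have pXK := quotient_pgroup (cfker 'chi_i) pX.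
move: (cfaithful_irr1_prime_der2 p_pr pXK fful_j j1) => /trivgP /=.
rewrite -quotient_der ?normal_norm // quotient_sub1 //.
exact: subset_trans (der_sub 2 X) (normal_norm nsKX).
Qed.

Section GroupOfOrderP6.

Variables (gT : finGroupType) (p : nat) (P : {group gT}).
Hypotheses (p_pr : prime p) (oP : #|P| = (p ^ 6)%N) (ntP'' : (P^`(2) != 1)%g).

Let pP : p.-group P. Proof. by rewrite /pgroup oP pnatX pnat_id. Qed.

Lemma derg3_eq1 : (P^`(3) = 1)%g.
Proof.
apply/eqP; apply: contraT => ntP'''; have := pgroup_dvd_card_derg pP ntP'''.
by rewrite oP dvdn_Pexp2l ?prime_gt1.
Qed.

Lemma irr1_order_p6 (i : Iirr P) :
  [\/ 'chi_i 1%g = 1, 'chi_i 1%g = p%:R | 'chi_i 1%g = (p ^ 2)%N%:R].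
Proof.
have [k lt_2k_6 ->] := irr1_pgroup_pfactor i p_pr oP isT.
case: k lt_2k_6 => [|[|[|k]]] lt_2k_6; first by constructor 1.
- by constructor 2; rewrite expn1.
- by constructor 3.
- by rewrite !mulnS in lt_2k_6.
Qed.

Lemma exists_irr1_prime : exists i : Iirr P, 'chi_i 1%g = p%:R.
Proof.
suff /existsP[i /eqP chi1] : [exists i : Iirr P, 'chi_i 1%g == p%:R] by exists i.
apply: contraT; rewrite negb_exists => /forallP no_p.
have p4_dv_PP' : (p ^ 4 %| #|P : P^`(1)|)%N.
  apply: dvdn_index_der1_nonlinear => [|i nlin_i]; first by rewrite oP dvdn_exp2l.
  have [] := irr1_order_p6 i => chi1; first by rewrite chi1 eqxx in nlin_i.
    by have := no_p i; rewrite chi1 eqxx.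
  by rewrite chi1 -natrX dvdC_nat -expnM.
have p3_dv_P' : (p ^ 3 %| #|P^`(1)%g|)%N.
  exact: pgroup_dvd_card_derg 1 (pgroupS (der_sub 1 P) pP) ntP''.
have : (p ^ (3 + 4) %| p ^ 6)%N.
  by rewrite -oP -(Lagrange (der_sub 1 P)) expnD dvdn_mul.
by rewrite dvdn_Pexp2l ?prime_gt1.
Qed.

Lemma exists_irr1_prime_sq : exists i : Iirr P, 'chi_i 1%g = (p ^ 2)%N%:R.
Proof.
suff /existsP[i /eqP chi1] : [exists i : Iirr P, 'chi_i 1%g == (p ^ 2)%N%:R].
  by exists i.
apply: contraT; rewrite negb_exists => /forallP no_p2.
case/negP: ntP''; rewrite -subG1 -(TI_cfker_irr P); apply/bigcapsP => i _.
have [] := irr1_order_p6 i => chi1.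
- have lin_i : 'chi_i \is a linear_char by rewrite qualifE /= irr_char chi1 /=.
  exact: subset_trans (der_subS 1 P) (lin_char_der1 lin_i).
- exact: irr1_prime_der2_sub_cfker p_pr pP chi1.
- by have := no_p2 i; rewrite chi1 eqxx.
Qed.

Lemma derived_length_order_p6 : has_derived_length P 3.
Proof.
apply/andP; split; first by rewrite derg3_eq1.
apply/forallP => -[[|[|[|]]] //= _]; apply: contraNneq ntP'' => Pk1.
all: by rewrite -subG1 -Pk1 ?der_sub ?der_subS.
Qed.

Lemma cd_order_p6 : cd P =i [:: 1; p%:R; (p ^ 2)%N%:R].
Proof.
move=> x; rewrite /cd !inE; apply/existsP/idP => [[i /eqP <-] | ].
  by have [] := irr1_order_p6 i => ->; rewrite eqxx ?orbT.
case/or3P => /eqP->.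
- by exists 0; rewrite irr0 cfun11.
- by have [i <-] := exists_irr1_prime; exists i.
- by have [i <-] := exists_irr1_prime_sq; exists i.
Qed.

End GroupOfOrderP6.

Theorem mainTheorem6 (gT : finGroupType) (p : nat) (P G : {group gT}) (a : gT) :
  prime p ->
  #|G| = (p ^ 5)%N ->
  #[a]%g = p ->
  ~~ (a \in 'C(G))%g ->
  (G ><| <[a]> = P)%g ->
  (P^`(2) != 1)%g ->
  has_derived_length P 3 /\
  cd P =i [:: 1%R; (p%:R)%R; ((p ^ 2)%N%:R)%R].
Proof.
move=> p_pr oG oa _ defP ntP''.
have oP : #|P| = (p ^ 6)%N by rewrite -(sdprod_card defP) oG -orderE oa -expnSr.
split; first exact: derived_length_order_p6 p_pr oP ntP''.
exact: cd_order_p6 p_pr oP ntP''.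
Qed.
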